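(* Let $S = Z(w^2 - F_{10}(x,y,z)) \subset \mathbb{P}(1,1,2,5)$ (weights $1,1,2,5$ for $x,y,z,w$, $F_{10}$ weighted homogeneous of degree $10$) be a surface with at worst canonical singularities. Let $G \leq \mathrm{Aut}(S)$ be the subgroup generated by those automorphisms whose associated matrix in $GL(2,\mathbb{C})$ is a scalar matrix. Then $|G| \leq 10$.
   Context: Every automorphism of $S$ extends to $\mathbb{P}(1,1,2,5)$ and has a unique lift to a graded automorphism of $\mathbb{C}[x,y,z,w]$ of the form $w\mapsto w$, $z\mapsto z$, $x\mapsto ax+cy$, $y \mapsto bx+dy$; the associated matrix is $A=\begin{pmatrix} a&b\\ c&d\end{pmatrix}$. *)

From HB Require Import structures.
From mathcomp Require Import all_boot all_order all_algebra.
From mathcomp Require Import mpoly.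
From mathcomp Require Import complex.
Set Implicit Arguments. Unset Strict Implicit. Unset Printing Implicit Defensive.
Import Order.TTheory GRing.Theory Num.Theory.
Local Open Scope ring_scope.

(* Setting: S = Z(w^2 - F(x,y,z)) in P(1,1,2,5), F in C[x,y,z] with
   x = 'X_0, y = 'X_1, z = 'X_2, weights 1,1,2. *)

Definition ix : 'I_3 := inord 0.
Definition iy : 'I_3 := inord 1.
Definition iz : 'I_3 := inord 2.

Definition whomog10 (C : comNzRingType) (F : {mpoly C[3]}) : Prop :=
  forall m : 'X_{1..3}, m \in msupp F ->
    (m ix + m iy + 2 * m iz = 10)%N.

Definition mx_subst (C : comNzRingType) (A : 'M[C]_2) : 3.-tuple {mpoly C[3]} :=
  [tuple A 0 0 *: 'X_ix + A 1 0 *: 'X_iy; A 0 1 *: 'X_ix + A 1 1 *: 'X_iy; 'X_iz].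

(* Aut(S), identified (via the unique normalized lift w|->w, z|->z) with the
   group of invertible matrices A whose substitution preserves w^2 - F,
   i.e. preserves F. *)
Definition AutS (C : comUnitRingType) (F : {mpoly C[3]}) (A : 'M[C]_2) : Prop :=
  A \in unitmx /\ F \mPo (mx_subst A) = F.

Definition scalar_gen (C : comUnitRingType) (F : {mpoly C[3]}) (A : 'M[C]_2) : Prop :=
  AutS F A /\ is_scalar_mx A.

Inductive gen_group (C : comUnitRingType) (P : 'M[C]_2 -> Prop) : 'M[C]_2 -> Prop :=
  | gen_one : gen_group P 1%:M
  | gen_in A : P A -> gen_group P A
  | gen_mul A B : gen_group P A -> gen_group P B -> gen_group P (A *m B)
  | gen_inv A : gen_group P A -> gen_group P (invmx A).

Definition G_scalar (C : comUnitRingType) (F : {mpoly C[3]}) : 'M[C]_2 -> Prop :=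
  gen_group (scalar_gen F).

(* Singular points of the affine cone X = {w^2 = F(x,y,z)} in C^4
   (point p = (x,y,z,w) with v = (x,y,z)). *)
Definition cone_sing (C : comNzRingType) (F : {mpoly C[3]}) (v : 'I_3 -> C) (w : C) : Prop :=
  w ^+ 2 = F.@[v] /\ 2%:R * w = 0 /\ forall i : 'I_3, (mderiv i F).@[v] = 0.

Definition wact (C : comNzRingType) (l : C) (v : 'I_3 -> C) : 'I_3 -> C :=
  fun i => l ^+ (if i == iz then 2 else 1)%N * v i.

(* S has (at worst) isolated singularities: the non-zero singular points of the
   cone lie in finitely many C^*-orbits.  (Necessary consequence of canonical
   singularities.) *)
Definition isolated_sing (C : fieldType) (F : {mpoly C[3]}) : Prop :=
  exists (n : nat) (L : 'I_n -> (('I_3 -> C) * C)%type),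
    forall v w, cone_sing F v w -> (exists i, v i != 0) \/ w != 0 ->
      exists k : 'I_n, exists2 l : C, l != 0 &
        v = wact l (L k).1 /\ w = l ^+ 5 * (L k).2.

(* A scalar automorphism [l%:M] multiplies every monomial [x^a y^b z^c] of [F]
   by [l ^+ (a + b)], so it preserves [F] only if [l ^+ (a + b) = 1] for every
   monomial in the support; this passes to the group the scalar automorphisms
   generate.  Some monomial of [F] has [0 < a + b]: otherwise [F = c z^5], every
   point [(x, y, 0, 0)] of the affine cone is singular, and these points fill
   infinitely many orbits.  By homogeneity [a + b <= 10], so the group consists
   of scalar matrices [l%:M] with [l] among the at most 10 roots of
   [X^(a + b) - 1]. *)

From HB Require Import structures.
From mathcomp Require Import all_boot all_order all_algebra.
From mathcomp Require Import mpoly.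
From mathcomp Require Import complex.
From mathcomp Require Import zify.
From Stdlib Require Import ClassicalEpsilon.
Set Implicit Arguments. Unset Strict Implicit. Unset Printing Implicit Defensive.
Import Order.TTheory GRing.Theory Num.Theory.
Local Open Scope ring_scope.

Lemma ixE : ix = 0. Proof. by apply: val_inj; rewrite /= inordK. Qed.
Lemma iyE : iy = 1. Proof. by apply: val_inj; rewrite /= inordK. Qed.
Lemma izE : iz = ord_max. Proof. by apply: val_inj; rewrite /= inordK. Qed.

Lemma iz_neq_ix : (iz == ix) = false. Proof. by rewrite izE ixE. Qed.
Lemma iz_neq_iy : (iz == iy) = false. Proof. by rewrite izE iyE. Qed.
Lemma iy_neq_ix : (iy == ix) = false. Proof. by rewrite iyE ixE. Qed.

Section ScalarSubstitution.

Variable C : comUnitRingType.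

Lemma comp_mpolyX_scalar (l : C) (m : 'X_{1..3}) :
  'X_[m] \mPo mx_subst l%:M = l ^+ (m ix + m iy) *: 'X_[m].
Proof.
rewrite comp_mpolyX mpolyXE_id !big_ord_recr !big_ord0 /= !mul1r.
rewrite /tnth /= !mxE /= !scale0r addr0 add0r !mulr1n.
have -> : widen_ord (leqnSn 2) (widen_ord (leqnSn 1) ord_max) = ix.
  by rewrite ixE; apply: val_inj.
have -> : widen_ord (leqnSn 2) ord_max = iy by rewrite iyE; apply: val_inj.
by rewrite -izE !exprZn -scalerAr -!scalerAl scalerA -exprD addnC.
Qed.

Lemma mcoeff_comp_scalar (F : {mpoly C[3]}) (l : C) (m : 'X_{1..3}) :
  (F \mPo mx_subst l%:M)@_m = F@_m * l ^+ (m ix + m iy).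
Proof.
rewrite comp_mpolyEX raddf_sum /=.
under eq_bigr do rewrite comp_mpolyX_scalar scalerA mcoeffZ mcoeffX.
have [Fm|Fm] := boolP (m \in msupp F).
  rewrite (bigD1_seq m) ?msupp_uniq //= eqxx mulr1 [X in _ + X]big1 ?addr0 //.
  by move=> m' /negbTE ->; rewrite mulr0.
rewrite memN_msupp_eq0 // mul0r big1_seq // => m' /andP [_ Fm'].
by case: eqP Fm' Fm => [-> ->|]; rewrite ?mulr0.
Qed.

Lemma AutS_scalar_root (F : {mpoly C[3]}) (l : C) (m : 'X_{1..3}) :
  GRing.lreg F@_m -> AutS F l%:M -> l ^+ (m ix + m iy) = 1.
Proof.
move=> regFm [_ Fl]; apply: regFm.
by rewrite /= mulr1 -[in RHS]Fl mcoeff_comp_scalar.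
Qed.

End ScalarSubstitution.

Lemma G_scalar_root (C : comUnitRingType) (F : {mpoly C[3]}) (m : 'X_{1..3}) A :
  GRing.lreg F@_m -> G_scalar F A -> exists2 l, A = l%:M & l ^+ (m ix + m iy) = 1.
Proof.
move=> regFm; elim=> [|B [AutB /is_scalar_mxP [b eB]]|B D _ [b -> rb] _ [d -> rd]|B _ [b -> rb]].
- by exists 1; rewrite ?expr1n.
- by exists b => //; apply: AutS_scalar_root regFm _; rewrite -eB.
- by exists (b * d); rewrite ?scalar_mxM // exprMn rb rd mulr1.
- by exists b^-1; rewrite ?invmx_scalar // exprVn rb invr1.
Qed.

Lemma meval_eq0_zsupp (C : comNzRingType) (p : {mpoly C[3]}) (v : 'I_3 -> C) :
  (forall m, m \in msupp p -> (0 < m iz)%N) -> v iz = 0 -> p.@[v] = 0.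
Proof.
move=> zp vz; rewrite mevalE big1_seq // => m /andP [_ pm].
by rewrite (bigD1 iz) //= vz expr0n gtn_eqF ?zp // mul0r mulr0.
Qed.

Section XyFreeForm.

Variables (C : comNzRingType) (F : {mpoly C[3]}).
Hypothesis homF : whomog10 F.
Hypothesis xy_freeF : forall m, m \in msupp F -> (m ix + m iy = 0)%N.

Lemma xy_free_mderiv_supp i m : m \in msupp (mderiv i F) -> (0 < m iz)%N.
Proof.
rewrite mcoeff_msupp mcoeff_deriv => Fim.
have Fm : (m + U_(i))%MM \in msupp F.
  by rewrite mcoeff_msupp; apply: contraNneq Fim => ->; rewrite mul0rn.
have := homF Fm; rewrite xy_freeF // add0n !mnmDE !mnm1E.
by case: (i == iz) => /=; lia.
Qed.

Lemma xy_free_cone_sing (v : 'I_3 -> C) : v iz = 0 -> cone_sing F v 0.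
Proof.
move=> vz; split; last split.
- rewrite expr0n /= meval_eq0_zsupp // => m Fm.
  by have := homF Fm; rewrite xy_freeF //; lia.
- by rewrite mulr0.
- by move=> i; rewrite meval_eq0_zsupp // => m; apply: xy_free_mderiv_supp.
Qed.

End XyFreeForm.

Lemma wact_ix (C : comNzRingType) (l : C) v : wact l v ix = l * v ix.
Proof. by rewrite /wact eq_sym iz_neq_ix. Qed.

Lemma wact_orbit_x1 (C : idomainType) (l l' : C) v :
  wact l v ix = 1 -> wact l' v ix = 1 -> wact l v = wact l' v.
Proof.
rewrite !wact_ix => lv l'v.
have vx : v ix != 0 by apply: contra_eqN lv => /eqP ->; rewrite mulr0 eq_sym oner_eq0.
by rewrite (mulIf vx (etrans lv (esym l'v))).
Qed.

Lemma xy_free_not_isolated_sing (C : numFieldType) (F : {mpoly C[3]}) :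
  whomog10 F -> (forall m, m \in msupp F -> (m ix + m iy = 0)%N) ->
  ~ isolated_sing F.
Proof.
move=> homF xy_freeF [n [L isoL]].
pose p (j : 'I_n.+1) (i : 'I_3) : C :=
  if i == ix then 1 else if i == iy then (j : nat)%:R else 0.
have orbit_p j : exists k : 'I_n, exists2 l : C, l != 0 &
    p j = wact l (L k).1 /\ 0 = l ^+ 5 * (L k).2.
  apply: isoL; first by apply: xy_free_cone_sing; rewrite // /p iz_neq_ix iz_neq_iy.
  by left; exists ix; rewrite /p eqxx oner_eq0.
have [f orbit_f] := fin_all_exists orbit_p.
suff /leq_card : injective f by rewrite !card_ord ltnn.
move=> j1 j2 f12.
have [l1 _ [p1 _]] := orbit_f j1; have [l2 _ [p2 _]] := orbit_f j2.
rewrite f12 in p1.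
have p12 : p j1 = p j2.
  by rewrite p1 p2; apply: wact_orbit_x1; rewrite -?p1 -?p2 /p eqxx.
apply/val_inj/eqP; rewrite -(eqr_nat C).
by move/(congr1 (fun v => v iy)): p12; rewrite /p iy_neq_ix eqxx => ->.
Qed.

Lemma isolated_sing_xy_monomial (C : numFieldType) (F : {mpoly C[3]}) :
  whomog10 F -> isolated_sing F ->
  exists2 m : 'X_{1..3}, m \in msupp F & (0 < m ix + m iy)%N.
Proof.
move=> homF isoF; have [/hasP [m Fm xy_pos]|/hasPn xy_free] :=
  boolP (has (fun m : 'X_{1..3} => (0 < m ix + m iy)%N) (msupp F)).
  by exists m.
by case: (xy_free_not_isolated_sing homF _ isoF) => m /xy_free; lia.
Qed.

Lemma unity_roots_seq (C : closedFieldType) (e : nat) : (0 < e)%N ->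
  exists2 r : seq C, size r = e & forall l, l ^+ e = 1 -> l \in r.
Proof.
move=> e_gt0; pose p : {poly C} := 'X^e - 1.
have [r p_split] := closed_field_poly_normal p.
have size_p : size p = e.+1 by rewrite /p -polyC1 size_XnsubC.
have lcp_neq0 : lead_coef p != 0 by rewrite lead_coef_eq0 -size_poly_eq0 size_p.
exists r.
  by move: size_p; rewrite {1}p_split size_scale // size_prod_XsubC => -[].
move=> l le1; have : root p l by rewrite /root /p !hornerE le1 subrr.
by rewrite p_split rootZ // root_prod_XsubC.
Qed.

Lemma pred_sub_seq_enum (T : eqType) (P : T -> Prop) (r : seq T) :
  (forall x, P x -> x \in r) ->
  exists s : seq T, [/\ uniq s, (size s <= size r)%N & forall x, P x <-> x \in s].
Proof.
move=> Pr; pose b x := if excluded_middle_informative (P x) then true else false.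
have bP x : b x <-> P x by rewrite /b; case: excluded_middle_informative.
exists (undup (filter b r)); split; first exact: undup_uniq.
  by rewrite (leq_trans (size_undup _)) // size_filter count_size.
move=> x; rewrite mem_undup mem_filter; split.
  by move=> Px; rewrite Pr // andbT; apply/bP.
by case/andP => /bP.
Qed.

Theorem corollary2p9 (R : rcfType) (F : {mpoly R[i][3]}) :
  whomog10 F -> isolated_sing F ->
  exists s : seq 'M[R[i]]_2,
    [/\ uniq s, (size s <= 10)%N & forall A, G_scalar F A <-> A \in s].
Proof.
move=> homF isoF.
have [m Fm xy_pos] := isolated_sing_xy_monomial homF isoF.
have [r size_r roots_r] := unity_roots_seq R[i] xy_pos.
have regFm : GRing.lreg F@_m by apply/lregP; rewrite -mcoeff_msupp.
have [|s [uniq_s size_s Gs]] :=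
  @pred_sub_seq_enum _ (G_scalar F) [seq l%:M | l <- r].
  by move=> A /(G_scalar_root regFm) [l -> /roots_r]; apply: map_f.
exists s; split=> //; apply: leq_trans size_s _.
by rewrite size_map size_r; have := homF _ Fm; lia.
Qed.
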